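(* Consider the network with vertices $s_1,s_2,s_3,t$ and directed edges $(s_3,s_1),(s_3,s_2),(s_1,t),(s_2,t)$, messages $X_1^k,X_2^k,X_3^k$ with all $3k$ components i.i.d. uniform on a finite alphabet $\mathcal{A}$, a demand function $f:\mathcal{A}^3\to\mathcal{B}$ applied componentwise, and a source-network code computing $f(X_1^k,X_2^k,X_3^k)$ at $t$ with zero error. Let $\mathbf{b}\in\mathcal{B}^k$ and $\mathbf{a}_3\in A_3(\mathbf{b})$. Define the vector $\mathbf{h}_{\mathbf{b},\mathbf{a}_3}\in\mathbb{R}^{M(\mathbf{a}_3,\mathbf{b})}$ whose first $|\mathcal{V}_{12}(\mathbf{a}_3,\mathbf{b})|$ entries are the numbers $h_{\mathbf{a}_3}(C,D)$, $(C,D)\in\mathcal{V}_{12}(\mathbf{a}_3,\mathbf{b})$, listed in non-increasing order, followed by $M(\mathbf{a}_3,\mathbf{b})-|\mathcal{V}_{12}(\mathbf{a}_3,\mathbf{b})|$ zeros. Then every conditional p.m.f. $\mathbf{p}\in\mathbb{R}_{\ge0}^{M(\mathbf{a}_3,\mathbf{b})}$ on the $M(\mathbf{a}_3,\mathbf{b})$ valid $(\mathbf{z}_1,\mathbf{z}_2)$-labels, given $f(X_1^k,X_2^k,X_3^k)=\mathbf{b}$ and $X_3^k=\mathbf{a}_3$, satisfies $\mathbf{p}\prec\mathbf{h}_{\mathbf{b},\mathbf{a}_3}/|A_{123}(\mathbf{b},\mathbf{a}_3)|$.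
   Context: A source-network code consists of encoders $\phi_{(s_3,s_1)},\phi_{(s_3,s_2)}:\mathcal{A}^k\to\mathcal{Z}^*$, $\phi_{(s_1,t)},\phi_{(s_2,t)}:\mathcal{A}^k\times\mathcal{Z}^*\to\mathcal{Z}^*$ ($\mathcal{Z}^*$ = finite sequences over a finite alphabet $\mathcal{Z}$) and a decoder $\psi_t$; $\mathbf{Z}_u=\phi_{(s_u,t)}(X_u^k,\phi_{(s_3,s_u)}(X_3^k))$, $u=1,2$; zero error means $\Pr\{\psi_t(\mathbf{Z}_1,\mathbf{Z}_2)\ne f(X_1^k,X_2^k,X_3^k)\}=0$. For $a_3\in\mathcal{A}$: $x\equiv^{a_3}y|_1$ iff $f(x,z,a_3)=f(y,z,a_3)$ for all $z\in\mathcal{A}$; $x\equiv^{a_3}y|_2$ iff $f(z,x,a_3)=f(z,y,a_3)$ for all $z$. For vectors, $\mathbf{x}_u\equiv^{\mathbf{a}_3}\mathbf{y}_u|_u$ iff componentwise equivalent under $\equiv^{a_3^{(j)}}|_u$. $A_3(\mathbf{b})=\{\mathbf{a}_3\in\mathcal{A}^k:\exists\mathbf{x}_1,\mathbf{x}_2,\ f(\mathbf{x}_1,\mathbf{x}_2,\mathbf{a}_3)=\mathbf{b}\}$; $A_{123}(\mathbf{b},\mathbf{a}_3)$ is the set of message tuples $(\mathbf{x}_1,\mathbf{x}_2,\mathbf{a}_3)$ with $f(\mathbf{x}_1,\mathbf{x}_2,\mathbf{a}_3)=\mathbf{b}$. $\mathcal{V}_{12}(\mathbf{a}_3,\mathbf{b})$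 is the set of pairs $(C,D)$ where $C$ is a class of $\equiv^{\mathbf{a}_3}|_1$, $D$ a class of $\equiv^{\mathbf{a}_3}|_2$, and there exist $\mathbf{x}_1\in C,\mathbf{x}_2\in D$ with $f(\mathbf{x}_1,\mathbf{x}_2,\mathbf{a}_3)=\mathbf{b}$; for such a pair, $h_{\mathbf{a}_3}(C,D)=|\{(\mathbf{x}_1,\mathbf{x}_2)\in C\times D: f(\mathbf{x}_1,\mathbf{x}_2,\mathbf{a}_3)=\mathbf{b}\}|$ (which equals $|C|\cdot|D|$). $M(\mathbf{a}_3,\mathbf{b})$ is the number of distinct pairs $(\mathbf{Z}_1,\mathbf{Z}_2)$ used by the code on tuples in $A_{123}(\mathbf{b},\mathbf{a}_3)$; for a zero-error code $M(\mathbf{a}_3,\mathbf{b})\ge|\mathcal{V}_{12}(\mathbf{a}_3,\mathbf{b})|$. Majorization: $\mathbf{p}\prec\mathbf{q}$ (same length $l$) iff the sum of the $t$ largest entries of $\mathbf{p}$ is at most that of $\mathbf{q}$ for $t=1,\ldots,l-1$ and the total sums are equal. *)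

From HB Require Import structures.
From mathcomp Require Import all_boot all_order all_algebra.
Set Implicit Arguments. Unset Strict Implicit. Unset Printing Implicit Defensive.
Import Order.TTheory GRing.Theory Num.Theory.
Local Open Scope ring_scope.

Section Defs.
Variables (A : finType) (B : eqType) (k : nat).
Variable (f : A -> A -> A -> B).

Definition vecA := {ffun 'I_k -> A}.
Definition vecB := {ffun 'I_k -> B}.

Definition fvec (x1 x2 x3 : vecA) : vecB := [ffun j => f (x1 j) (x2 j) (x3 j)].

Definition omega := (vecA * vecA * vecA)%type.

(* All 3k components i.i.d. uniform on A  =  uniform distribution on omega. *)
Definition Pr (R : realFieldType) (E : {set omega}) : R := #|E|%:R / #|[set: omega]|%:R.

Definition condPr (R : realFieldType) (E C : {set omega}) : R :=
  Pr R (E :&: C) / Pr R C.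

Definition equiv1 (a3 x y : A) : bool := [forall z, f x z a3 == f y z a3].
Definition equiv2 (a3 x y : A) : bool := [forall z, f z x a3 == f z y a3].

Definition vequiv1 (a3 x y : vecA) : bool := [forall j, equiv1 (a3 j) (x j) (y j)].
Definition vequiv2 (a3 x y : vecA) : bool := [forall j, equiv2 (a3 j) (x j) (y j)].

Definition is_class1 (a3 : vecA) (C : {set vecA}) : bool :=
  [exists x, C == [set y | vequiv1 a3 x y]].
Definition is_class2 (a3 : vecA) (D : {set vecA}) : bool :=
  [exists x, D == [set y | vequiv2 a3 x y]].

Definition A3set (b : vecB) : {set vecA} :=
  [set a3 | [exists x1, exists x2, fvec x1 x2 a3 == b]].

Definition A123 (b : vecB) (a3 : vecA) : {set omega} :=
  [set x : omega | (fvec x.1.1 x.1.2 x.2 == b) && (x.2 == a3)].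

Definition V12 (a3 : vecA) (b : vecB) : {set {set vecA} * {set vecA}} :=
  [set CD : {set vecA} * {set vecA} |
     [&& is_class1 a3 CD.1, is_class2 a3 CD.2 &
         [exists x1 in CD.1, exists x2 in CD.2, fvec x1 x2 a3 == b]]].

Definition hval (a3 : vecA) (b : vecB) (CD : {set vecA} * {set vecA}) : nat :=
  #|[set x12 : vecA * vecA | (x12.1 \in CD.1) && (x12.2 \in CD.2)
                             && (fvec x12.1 x12.2 a3 == b)]|.

Variable Z : finType.
Record code := Code {
  phi31 : vecA -> seq Z;
  phi32 : vecA -> seq Z;
  phi1t : vecA -> seq Z -> seq Z;
  phi2t : vecA -> seq Z -> seq Z;
  psit  : seq Z -> seq Z -> vecB }.

Definition label (c : code) (x : omega) : seq Z * seq Z :=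
  (phi1t c x.1.1 (phi31 c x.2), phi2t c x.1.2 (phi32 c x.2)).

Definition error_event (c : code) : {set omega} :=
  [set x : omega | psit c (label c x).1 (label c x).2 != fvec x.1.1 x.1.2 x.2].

Definition zero_error (R : realFieldType) (c : code) : Prop :=
  Pr R (error_event c) = 0.

(* the valid labels used on A_123(b, a3), and their number M(a3, b) *)
Definition labels (c : code) (a3 : vecA) (b : vecB) : seq (seq Z * seq Z) :=
  undup [seq label c x | x <- enum (A123 b a3)].
Definition Mnum (c : code) (a3 : vecA) (b : vecB) : nat := size (labels c a3 b).

Definition label_event (c : code) (l : seq Z * seq Z) : {set omega} :=
  [set x : omega | label c x == l].

Definition hvec (R : realFieldType) (c : code) (a3 : vecA) (b : vecB) : seq R :=
  sort (fun u v : R => v <= u) [seq (hval a3 b CD)%:R | CD <- enum (V12 a3 b)]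
  ++ nseq (Mnum c a3 b - #|V12 a3 b|) 0.
End Defs.

Definition topsum (R : realFieldType) (t : nat) (s : seq R) : R :=
  \sum_(u <- take t (sort (fun u v : R => v <= u) s)) u.

Definition majorized (R : realFieldType) (p q : seq R) : Prop :=
  size p = size q /\
  (forall t, (1 <= t < size p)%N -> topsum t p <= topsum t q) /\
  \sum_(u <- p) u = \sum_(u <- q) u.

(* Fix a3 and restrict to A_123(b, a3).  Zero error makes f(x1, x2, a3) a function of the two
   labels, so the label of s1 determines the |_1-class of x1 and the label of s2 the |_2-class
   of x2: every label event lies inside a single block of V_12, the blocks being the fibres of
   x |-> (class of x1, class of x2).  Hence the t most likely labels cover at most t blocks and
   carry at most the mass of the t heaviest blocks; both sides have total mass one, and
   |V_12| <= M because distinct blocks need distinct labels. *)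

From HB Require Import structures.
From mathcomp Require Import all_boot all_order all_algebra.
Import Order.TTheory GRing.Theory Num.Theory.
Local Open Scope ring_scope.
Set Implicit Arguments. Unset Strict Implicit. Unset Printing Implicit Defensive.

Section TopSum.
Variable R : realFieldType.
Implicit Types (d : R) (p q u s : seq R) (t : nat).

Local Notation ge := (fun u v : R => v <= u).

Lemma ge_total : total ge. Proof. by move=> u v; exact: le_total. Qed.

Lemma topsum_perm t p q : perm_eq p q -> topsum t p = topsum t q.
Proof. by move=> /(perm_sortP ge_total ge_trans ge_anti) pq; rewrite /topsum pq. Qed.

Lemma sum_le_sum_take_sorted s u t :
  sorted ge s -> all (>= 0) s -> subseq u s -> (size u <= t)%N ->
  \sum_(x <- u) x <= \sum_(x <- take t s) x.
Proof.
elim: s u t => [|x s IHs] u t s_sorted; first by rewrite subseq0 => _ /eqP ->.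
move=> /= /andP[x_ge0 s_ge0].
have x_max : all (ge x) s := order_path_min ge_trans s_sorted.
have {}s_sorted := path_sorted s_sorted.
case: t => [|t]; first by case: u.
rewrite /= big_cons; case: u => [_ _|y u]; rewrite ?big_cons /=.
  by rewrite big_nil addr_ge0 // big_seq sumr_ge0 // => z /mem_take /(allP s_ge0).
case: eqP => [-> u_sub u_size | _ yu_sub yu_size]; first by rewrite lerD2l IHs.
apply: lerD; first exact/(allP x_max)/(mem_subseq yu_sub)/mem_head.
by apply: IHs => //; exact: subseq_trans (subseq_cons u y) yu_sub.
Qed.

Lemma sum_le_topsum t u q :
  all (>= 0) q -> subseq u q -> (size u <= t)%N -> \sum_(x <- u) x <= topsum t q.
Proof.
move=> q_ge0 u_sub u_size; rewrite /topsum -(perm_big _ (permEl (perm_sort ge u))).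
apply: sum_le_sum_take_sorted; rewrite ?size_sort //.
- exact: sort_sorted ge_total _.
- by rewrite all_sort.
- exact: subseq_sort ge_total ge_trans _ _ u_sub.
Qed.

Lemma sort_ge_divr d p : 0 < d ->
  sort ge [seq x / d | x <- p] = [seq x / d | x <- sort ge p].
Proof.
move=> d_gt0; apply: (sorted_eq ge_trans ge_anti).
- exact: sort_sorted ge_total _.
- have ge_divr : {homo (fun x => x / d) : x y / ge x y}.
    by move=> x y /=; rewrite ler_pM2r ?invr_gt0.
  exact: homo_sorted ge_divr _ (sort_sorted ge_total p).
- by rewrite perm_sort perm_map // perm_sym perm_sort.
Qed.

Lemma topsum_divr t d p : 0 < d -> topsum t [seq x / d | x <- p] = topsum t p / d.
Proof. by move=> d_gt0; rewrite /topsum sort_ge_divr // -map_take big_map mulr_suml. Qed.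

Lemma majorized_divr d p q : 0 < d -> majorized p q ->
  majorized [seq x / d | x <- p] [seq x / d | x <- q].
Proof.
move=> d_gt0 [size_pq [top_pq sum_pq]]; split; first by rewrite !size_map.
split; last by rewrite !big_map -!mulr_suml sum_pq.
by move=> t; rewrite size_map !topsum_divr // ler_pM2r ?invr_gt0 // => /top_pq.
Qed.

End TopSum.

Definition fibre (T : finType) (U : eqType) (S : {set T}) (g : T -> U) (u : U) : {set T} :=
  [set x in S | g x == u].

Section Fibres.
Variables (T : finType) (S : {set T}).

Lemma sum_card_fibre (U : eqType) (g : T -> U) (L : seq U) :
  uniq L -> (\sum_(l <- L) #|fibre S g l|)%N = #|[set x in S | g x \in L]|.
Proof.
move=> L_uniq.
have card_sep (P : pred T) : #|[set x in S | P x]| = (\sum_(x in S) P x)%N.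
  rewrite -sum1_card big_mkcond [RHS]big_mkcond; apply: eq_bigr => x _.
  by rewrite inE; case: (x \in S); case: (P x).
under eq_bigr do rewrite /fibre card_sep.
rewrite exchange_big card_sep; apply: eq_bigr => x _.
rewrite -(count_uniq_mem _ L_uniq) -sum1_count [RHS]big_mkcond.
by apply: eq_bigr => l _; rewrite /= eq_sym; case: (l == g x).
Qed.

Lemma card_imset_le_size (U : eqType) (V : finType) (g : T -> U) (h : T -> V) (L : seq U) :
  {in S &, forall x y, g x = g y -> h x = h y} ->
  (#|h @: [set x in S | g x \in L]| <= size L)%N.
Proof.
move=> g_det_h.
pose reps := pmap (fun l => [pick x in S | g x == l]) L.
have sub : h @: [set x in S | g x \in L] \subset [seq h x | x <- reps].
  apply/subsetP => _ /imsetP[y + ->]; rewrite inE => /andP[y_in gy_in].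
  move: (map_f (fun l => [pick x in S | g x == l]) gy_in) => /=.
  case: pickP => [x /andP[x_in /eqP gx] pick_x | /(_ y)]; last by rewrite y_in eqxx.
  by rewrite -(g_det_h x y) // map_f // mem_pmap.
apply: leq_trans (subset_leq_card sub) _.
by rewrite (leq_trans (card_size _)) // size_map size_pmap count_size.
Qed.

End Fibres.

Section FibreMajorization.
Variables (R : realFieldType) (T : finType) (U : eqType) (V : finType).
Variables (S : {set T}) (g : T -> U) (h : T -> V) (s : seq U).
Hypothesis g_determines_h : {in S &, forall x y, g x = g y -> h x = h y}.
Hypothesis s_uniq : uniq s.
Hypothesis s_covers : {in S, forall x, g x \in s}.

Local Notation ge := (fun u v : R => v <= u).

Lemma sum_card_fibre_set (G : {set V}) :
  (\sum_(v in G) #|fibre S h v|)%N = #|[set x in S | h x \in G]|.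
Proof.
rewrite -big_enum sum_card_fibre ?enum_uniq //.
by apply: eq_card => x; rewrite !inE mem_enum.
Qed.

Lemma sum_card_fibre_covering : (\sum_(l <- s) #|fibre S g l|)%N = #|S|.
Proof.
rewrite sum_card_fibre //; apply: eq_card => x; rewrite inE.
by case x_in: (x \in S); rewrite //= s_covers.
Qed.

Lemma sum_card_fibre_image : (\sum_(v in h @: S) #|fibre S h v|)%N = #|S|.
Proof.
rewrite sum_card_fibre_set; apply: eq_card => x; rewrite inE.
by case x_in: (x \in S); rewrite //= imset_f.
Qed.

Lemma card_image_le_size : (#|h @: S| <= size s)%N.
Proof.
have covered : [set x in S | g x \in s] = S.
  by apply/setP => x; rewrite inE; case x_in: (x \in S); rewrite //= s_covers.
by rewrite -{1}covered card_imset_le_size.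
Qed.

Lemma topsum_fibres_le t :
  topsum t [seq #|fibre S g l|%:R : R | l <- s] <=
  topsum t ([seq #|fibre S h v|%:R | v <- enum (h @: S)] ++ nseq (size s - #|h @: S|) 0).
Proof.
rewrite {1}/topsum sort_map -map_take big_map.
set L := take t _.
have L_uniq : uniq L by rewrite take_uniq // sort_uniq.
have L_size : (size L <= t)%N by rewrite size_take_min geq_minl.
set G := h @: [set x in S | g x \in L].
have G_sub : G \subset h @: S by apply/imsetS/subsetP => x; rewrite inE => /andP[].
set u := [seq #|fibre S h v|%:R : R | v <- [seq v <- enum (h @: S) | v \in G]].
have u_sum : \sum_(x <- u) x = (\sum_(v in G) #|fibre S h v|)%:R.
  rewrite big_map big_filter big_enum_cond natr_sum.
  by apply: eq_bigl => v; rewrite andb_idl //; apply: (subsetP G_sub).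
apply: (@le_trans _ _ (\sum_(x <- u) x)).
  rewrite u_sum -natr_sum ler_nat sum_card_fibre // sum_card_fibre_set subset_leq_card //.
  apply/subsetP => x; rewrite !inE => /andP[x_in gx_in].
  by rewrite x_in imset_f // inE x_in gx_in.
apply: sum_le_topsum.
- by rewrite all_cat all_nseq lexx orbT andbT; apply/allP => _ /mapP[v _ ->].
- by apply: subseq_trans (prefix_subseq _ _); rewrite map_subseq ?filter_subseq.
- have G_size : (#|G| <= t)%N := leq_trans (card_imset_le_size _ g_determines_h) L_size.
  rewrite size_map (leq_trans _ G_size) // cardE.
  apply: uniq_leq_size => [|v]; first exact/filter_uniq/enum_uniq.
  by rewrite mem_filter !mem_enum => /andP[].
Qed.

Theorem majorized_fibres :
  majorized [seq #|fibre S g l|%:R : R | l <- s]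
    (sort ge [seq #|fibre S h v|%:R | v <- enum (h @: S)]
     ++ nseq (size s - #|h @: S|) 0).
Proof.
set hs := [seq #|fibre S h v|%:R : R | v <- enum (h @: S)]; set pad := nseq _ _.
split.
  by rewrite size_cat size_sort !size_map -cardE size_nseq subnKC ?card_image_le_size.
split=> [t _|].
  have sorted_perm : perm_eq (sort ge hs ++ pad) (hs ++ pad) by rewrite perm_cat2r perm_sort.
  by rewrite (topsum_perm t sorted_perm) topsum_fibres_le.
rewrite big_cat big_map /= big_nseq iter_addr mul0rn !addr0.
rewrite -natr_sum sum_card_fibre_covering -sum_card_fibre_image natr_sum.
by rewrite (perm_big _ (permEl (perm_sort _ _))) big_map big_enum.
Qed.

End FibreMajorization.

Section Classes.
Variables (A : finType) (B : eqType) (k : nat) (f : A -> A -> A -> B).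
Local Notation vec := (vecA A k).

Definition profile1 (a3 x : vec) : {ffun 'I_k * A -> B} :=
  [ffun jz => f (x jz.1) jz.2 (a3 jz.1)].

Definition class1 (a3 x : vec) : {set vec} := [set y | vequiv1 f a3 x y].

Lemma vequiv1E (a3 x y : vec) : vequiv1 f a3 x y = (profile1 a3 x == profile1 a3 y).
Proof.
apply/forallP/eqP => [xy | rxy j].
  by apply/ffunP => -[j z]; rewrite !ffunE; apply/eqP/(forallP (xy j)).
by apply/forallP => z; move/ffunP/(_ (j, z)): rxy; rewrite !ffunE => ->.
Qed.

Lemma eq_class1 (a3 x y : vec) : (class1 a3 x == class1 a3 y) = vequiv1 f a3 x y.
Proof.
rewrite vequiv1E; apply/eqP/eqP => [/setP/(_ y) | rxy].
  by rewrite !inE !vequiv1E eqxx => /eqP.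
by apply/setP => z; rewrite !inE !vequiv1E rxy.
Qed.

Lemma mem_class1 (a3 w x : vec) : (x \in class1 a3 w) = (class1 a3 x == class1 a3 w).
Proof. by rewrite inE eq_sym eq_class1. Qed.

Lemma is_class1_mem (a3 : vec) (C : {set vec}) (x : vec) :
  is_class1 f a3 C -> (x \in C) = (class1 a3 x == C).
Proof. by case/existsP => w /eqP ->; exact: mem_class1. Qed.

Lemma vequiv1_of_factorization (T1 T2 : Type) (e1 : vec -> T1) (e2 : vec -> T2)
    (F : T1 -> T2 -> vecB B k) (a3 x y : vec) :
  (forall x1 x2, fvec f x1 x2 a3 = F (e1 x1) (e2 x2)) -> e1 x = e1 y -> vequiv1 f a3 x y.
Proof.
move=> fact e1xy; apply/forallP => j; apply/forallP => z.
have /ffunP/(_ j) := fact x [ffun => z]; have /ffunP/(_ j) := fact y [ffun => z].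
by rewrite e1xy !ffunE => <- ->.
Qed.

End Classes.

Section Blocks.
Variables (A : finType) (B : eqType) (k : nat) (f : A -> A -> A -> B).
Local Notation vec := (vecA A k).
Local Notation swap12 := (fun u v w => f v u w).

Definition class2 (a3 x : vec) : {set vec} := [set y | vequiv2 f a3 x y].

(* [vequiv2 f] is convertible to [vequiv1 swap12], so the lemmas about the second coordinate
   are instances of those about the first. *)

Lemma eq_class2 (a3 x y : vec) : (class2 a3 x == class2 a3 y) = vequiv2 f a3 x y.
Proof. exact: (eq_class1 swap12). Qed.

Lemma mem_class2 (a3 w x : vec) : (x \in class2 a3 w) = (class2 a3 x == class2 a3 w).
Proof. exact: (mem_class1 swap12). Qed.

Lemma is_class2_mem (a3 : vec) (D : {set vec}) (x : vec) :
  is_class2 f a3 D -> (x \in D) = (class2 a3 x == D).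
Proof. exact (is_class1_mem (f := swap12) x). Qed.

Lemma vequiv2_of_factorization (T1 T2 : Type) (e1 : vec -> T1) (e2 : vec -> T2)
    (F : T1 -> T2 -> vecB B k) (a3 x y : vec) :
  (forall x1 x2, fvec f x1 x2 a3 = F (e1 x1) (e2 x2)) -> e2 x = e2 y -> vequiv2 f a3 x y.
Proof.
move=> fact.
exact: (vequiv1_of_factorization (f := swap12) (F := fun t2 t1 => F t1 t2) (fun x2 x1 => fact x1 x2)).
Qed.

Definition block (a3 : vec) (x : omega A k) : {set vec} * {set vec} :=
  (class1 f a3 x.1.1, class2 a3 x.1.2).

Lemma card_A123_gt0 (b : vecB B k) (a3 : vec) : a3 \in A3set f b -> (0 < #|A123 f b a3|)%N.
Proof.
rewrite inE => /existsP[x1 /existsP[x2 fx]].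
by apply/card_gt0P; exists ((x1, x2), a3); rewrite inE fx eqxx.
Qed.

Lemma V12_block (b : vecB B k) (a3 : vec) : V12 f a3 b = block a3 @: A123 f b a3.
Proof.
apply/setP => -[C D]; apply/idP/imsetP => [|[[[x1 x2] x3]]].
  rewrite inE /= => /and3P[C1 D2 /existsP[x1 /andP[+ /existsP[x2 /andP[+ fx]]]]].
  rewrite (is_class1_mem _ C1) (is_class2_mem _ D2) => /eqP C_x1 /eqP D_x2.
  by exists ((x1, x2), a3); rewrite ?inE ?fx ?eqxx // /block C_x1 D_x2.
rewrite inE /= => /andP[fx /eqP x3E] [-> ->]; subst x3; rewrite inE /=; apply/and3P; split.
- by apply/existsP; exists x1.
- by apply/existsP; exists x2.
apply/existsP; exists x1; rewrite mem_class1 eqxx /=.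
by apply/existsP; exists x2; rewrite mem_class2 eqxx fx.
Qed.

Lemma hval_block (b : vecB B k) (a3 : vec) (C D : {set vec}) :
  is_class1 f a3 C -> is_class2 f a3 D ->
  hval f a3 b (C, D) = #|fibre (A123 f b a3) (block a3) (C, D)|.
Proof.
move=> C1 D2; have inj : injective (fun x12 : vec * vec => (x12, a3)) by move=> u v [].
rewrite /hval -(card_imset _ inj); apply: eq_card => -[[x1 x2] x3].
apply/imsetP/idP => [[[y1 y2]] | ]; rewrite !inE /= ?(is_class1_mem _ C1) ?(is_class2_mem _ D2).
  by move=> /andP[/andP[/eqP <- /eqP <-] fy] [-> -> ->]; rewrite fy !eqxx.
move=> /andP[/andP[fx /eqP x3E] /eqP[C_x1 D_x2]]; subst x3; exists (x1, x2) => //.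
by rewrite inE /= fx (is_class1_mem _ C1) (is_class2_mem _ D2) C_x1 D_x2 !eqxx.
Qed.

End Blocks.

Section Codes.
Variables (R : realFieldType) (A : finType) (B : eqType) (Z : finType) (k : nat).
Variables (f : A -> A -> A -> B) (c : code A B k Z).

Lemma zero_error_decodes : zero_error f R c ->
  forall x, psit c (label c x).1 (label c x).2 = fvec f x.1.1 x.1.2 x.2.
Proof.
rewrite /zero_error /Pr => /eqP; rewrite mulf_eq0 invr_eq0 !pnatr_eq0 => err0 x.
have : x \notin error_event f c.
  by case/orP: err0 => /eqP/card0_eq/(_ x); rewrite !inE // => ->.
by rewrite inE negbK => /eqP.
Qed.

Lemma label_determines_block (b : vecB B k) (a3 : vecA A k) : zero_error f R c ->
  {in A123 f b a3 &, forall x y, label c x = label c y -> block f a3 x = block f a3 y}.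
Proof.
move=> /zero_error_decodes dec [[x1 x2] x3] [[y1 y2] y3].
rewrite !inE /= => /andP[_ /eqP ->] /andP[_ /eqP ->] [l1 l2].
have fact u1 u2 : fvec f u1 u2 a3 = psit c (phi1t c u1 (phi31 c a3)) (phi2t c u2 (phi32 c a3)).
  exact: esym (dec ((u1, u2), a3)).
congr pair; apply/eqP; rewrite ?eq_class1 ?eq_class2.
  exact: vequiv1_of_factorization fact l1.
exact: vequiv2_of_factorization fact l2.
Qed.

End Codes.

(* No hypothesis on [C]: when it is empty both sides are [0], as [0^-1 = 0]. *)
Lemma condPrE (R : realFieldType) (A : finType) (k : nat) (E C : {set omega A k}) :
  condPr R E C = #|E :&: C|%:R / #|C|%:R.
Proof.
rewrite /condPr /Pr; have [n0 | n_neq0] := eqVneq (#|[set: omega A k]|%:R : R) 0.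
  move/eqP: (n0); rewrite pnatr_eq0 => /eqP card0.
  have -> : #|C| = 0%N by apply/eqP; rewrite -leqn0 -card0 subset_leq_card ?subsetT.
  by rewrite n0 !invr0 !mulr0 mul0r.
by rewrite invf_div mulrA divfK.
Qed.

Theorem lemma6 (R : realFieldType) (A : finType) (B : eqType) (Z : finType)
    (k : nat) (f : A -> A -> A -> B) (c : code A B k Z)
    (Hzero : zero_error f R c)
    (b : vecB B k) (a3 : vecA A k) (Ha3 : a3 \in A3set f b)
    (s : seq (seq Z * seq Z)) (Hs : perm_eq s (labels f c a3 b)) :
  majorized
    [seq condPr R (label_event c l) (A123 f b a3) | l <- s]
    [seq u / (#|A123 f b a3|)%:R | u <- hvec f R c a3 b].
Proof.
set S := A123 f b a3.
have condPr_fibre : [seq condPr R (label_event c l) S | l <- s]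
                  = [seq x / #|S|%:R | x <- [seq #|fibre S (label c) l|%:R | l <- s]].
  rewrite -map_comp; apply: eq_map => l /=; rewrite condPrE.
  by congr (_%:R / _); apply: eq_card => x; rewrite !inE andbC.
have hval_fibre : [seq (hval f a3 b CD)%:R | CD <- enum (V12 f a3 b)]
                = [seq #|fibre S (block f a3) CD|%:R : R | CD <- enum (V12 f a3 b)].
  apply/eq_in_map => -[C D]; rewrite mem_enum inE => /and3P[C1 D2 _].
  by rewrite hval_block.
rewrite condPr_fibre /hvec /Mnum hval_fibre -(perm_size Hs) V12_block.
apply/majorized_divr/majorized_fibres.
- by rewrite ltr0n card_A123_gt0.
- exact: label_determines_block Hzero.
- by rewrite (perm_uniq Hs) undup_uniq.
- by move=> x x_in; rewrite (perm_mem Hs) mem_undup map_f ?mem_enum.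
Qed.
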